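(* Let $(\mathcal{F},\tau)$ be a locally convex Hausdorff space of $\mathbb{K}$-valued continuous functions on a non-empty Hausdorff $gk_{\mathbb{R}}$-space $\Omega$, and $\mathcal{B}$ the family of $\tau$-bounded sets. If $(\mathcal{F},\tau)$ satisfies (BBC) for some locally convex Hausdorff topology $\widetilde{\tau}$ on $\mathcal{F}$ with $\tau_{\mathrm{co}}\leq\widetilde{\tau}$, then the map $\Delta\colon\Omega\to(\mathcal{F}_{\mathcal{B},\widetilde{\tau}}',\beta)$, $\Delta(x)=\delta_x$, is (well-defined and) continuous.
   Context: $\mathbb{K}\in\{\mathbb{R},\mathbb{C}\}$. $\delta_x(f)=f(x)$. $\tau_{\mathrm{co}}$ is the compact-open topology (uniform convergence on compact subsets of $\Omega$), restricted to $\mathcal{F}$. (BBC) for $\widetilde{\tau}$: every $\tau$-bounded subset of $\mathcal{F}$ is contained in an absolutely convex $\tau$-bounded $\widetilde{\tau}$-compact set. $\mathcal{F}_{\mathcal{B},\widetilde{\tau}}'$ is the space of linear functionals on $\mathcal{F}$ whose restriction to each $\tau$-bounded set is $\widetilde{\tau}$-continuous, with topology $\beta$ of uniform convergence on $\tau$-bounded sets. A topological space $\Omega$ is a $gk_{\mathbb{R}}$-space if for every completely regular space $Z$, every map $\Omega\to Z$ whose restrictions to all compact subsets are continuous is continuous. *)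

From HB Require Import structures.
From mathcomp Require Import all_boot all_order all_algebra.
From mathcomp Require Import all_classical all_reals all_analysis.
From mathcomp Require Import complex.
Set Implicit Arguments. Unset Strict Implicit. Unset Printing Implicit Defensive.
Import Order.TTheory GRing.Theory Num.Theory.
Import numFieldNormedType.Exports.
Local Open Scope classical_set_scope.
Local Open Scope ring_scope.

Definition completely_regular (R : realType) (Z : topologicalType) :=
  forall (C : set Z) (z : Z), closed C -> ~ C z ->
    exists g : Z -> R, [/\ continuous g, g z = 0 & forall c, C c -> g c = 1].

Definition gkR_space (R : realType) (Om : topologicalType) :=
  forall Z : topologicalType, completely_regular R Z ->
    forall h : Om -> Z, (forall C : set Om, compact C -> {within C, continuous h}) ->
      continuous h.

Section FunctionSpaces.
Context {K : numFieldType} {Om : topologicalType}.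
Local Notation fn := (Om -> K).

Definition fadd (f g : fn) : fn := fun w => f w + g w.
Definition fscale (a : K) (f : fn) : fn := fun w => a * f w.
Definition fzero : fn := fun _ => 0.

Definition function_space (F : set fn) :=
  [/\ F fzero, (forall f g, F f -> F g -> F (fadd f g)),
      (forall a f, F f -> F (fscale a f)) & (forall f, F f -> continuous f)].

Definition is_topology_on (F : set fn) (T : set (set fn)) :=
  [/\ (forall U, T U -> U `<=` F), T F,
      (forall U V, T U -> T V -> T (U `&` V)) &
      (forall S : set (set fn), S `<=` T -> T (\bigcup_(U in S) U))].

Definition add_continuous (F : set fn) (T : set (set fn)) :=
  forall f g U, F f -> F g -> T U -> U (fadd f g) ->
    exists V W, [/\ T V, T W, V f, W g &
                    forall h k, V h -> W k -> U (fadd h k)].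

Definition scale_continuous (F : set fn) (T : set (set fn)) :=
  forall a f U, F f -> T U -> U (fscale a f) ->
    exists e : K, 0 < e /\ exists V, [/\ T V, V f &
       forall b h, `|b - a| < e -> V h -> U (fscale b h)].

Definition convex_fset (V : set fn) :=
  forall f g (t : K), V f -> V g -> 0 <= t <= 1 ->
    V (fadd (fscale t f) (fscale (1 - t) g)).

Definition locally_convex (T : set (set fn)) :=
  forall f U, T U -> U f -> exists V, [/\ T V, V f, convex_fset V & V `<=` U].

Definition hausdorff_on (F : set fn) (T : set (set fn)) :=
  forall f g, F f -> F g -> f <> g ->
    exists U V, [/\ T U, T V, U f, V g & U `&` V = set0].

Definition lc_hausdorff (F : set fn) (T : set (set fn)) :=
  [/\ is_topology_on F T, add_continuous F T, scale_continuous F T,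
      locally_convex T & hausdorff_on F T].

Definition bounded_in (F : set fn) (T : set (set fn)) (B : set fn) :=
  B `<=` F /\
  forall U, T U -> U fzero -> exists s : K, 0 < s /\
    forall t : K, s < t -> forall f, B f -> exists u, U u /\ f = fscale t u.

Definition compact_in (T : set (set fn)) (D : set fn) :=
  forall S : set (set fn), S `<=` T -> D `<=` \bigcup_(U in S) U ->
    exists S', [/\ finite_set S', S' `<=` S & D `<=` \bigcup_(U in S') U].

Definition abs_convex (D : set fn) :=
  forall f g (a b : K), D f -> D g -> `|a| + `|b| <= 1 ->
    D (fadd (fscale a f) (fscale b g)).

Definition BBC (F : set fn) (T Tt : set (set fn)) :=
  forall B, bounded_in F T B ->
    exists D, [/\ B `<=` D, abs_convex D, bounded_in F T D & compact_in Tt D].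

Definition tau_co (F : set fn) : set (set fn) :=
  [set U | U `<=` F /\ forall f, U f -> exists (C : set Om) (e : K),
      [/\ compact C, 0 < e &
          [set g | F g /\ forall x, C x -> `|g x - f x| < e] `<=` U]].

Definition dual_B (F : set fn) (T Tt : set (set fn)) : set (fn -> K) :=
  [set phi | (forall a f g, F f -> F g ->
                phi (fadd (fscale a f) g) = a * phi f + phi g) /\
     forall B, bounded_in F T B -> forall f, B f -> forall e : K, 0 < e ->
       exists V, [/\ Tt V, V f & forall g, B g -> V g -> `|phi g - phi f| < e]].

Definition beta_open (F : set fn) (T Tt : set (set fn)) (U : set (fn -> K)) :=
  U `<=` dual_B F T Tt /\
  forall phi, U phi -> exists (B : set fn) (e : K),
    [/\ bounded_in F T B, 0 < e &
        [set psi | dual_B F T Tt psi /\ forall f, B f -> `|psi f - phi f| < e]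
          `<=` U].

Definition delta (x : Om) : fn -> K := fun f => f x.

End FunctionSpaces.

Definition prop4p9_for (R : realType) (K : numFieldType) :=
  forall (Om : topologicalType) (F : set (Om -> K)) (tau taut : set (set (Om -> K))),
    hausdorff_space Om -> (exists x : Om, True) -> gkR_space R Om ->
    function_space F -> lc_hausdorff F tau -> lc_hausdorff F taut ->
    tau_co F `<=` taut -> BBC F tau taut ->
    (forall x : Om, dual_B F tau taut (delta x)) /\
    (forall U, beta_open F tau taut U -> open (delta @^-1` U)).

(* By (BBC) a tau-bounded set B lies in a tau~-compact set D, and tau~ is finer
   than the compact-open topology; covering D by finitely many compact-open balls
   shows that B is equicontinuous on every compact subset of Om.  Hence the
   oscillation x |-> sup_(f in B) min(1, |f x - f x0|) is continuous on compacts,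
   thus continuous because Om is a gk_R-space, and it vanishes at x0.  So B is
   equicontinuous at x0, which is continuity of delta at x0 for the topology of
   uniform convergence on tau-bounded sets. *)

From HB Require Import structures.
From mathcomp Require Import all_boot all_order all_algebra.
From mathcomp Require Import all_classical all_reals all_analysis.
From mathcomp Require Import complex ring lra.
Import Order.TTheory GRing.Theory Num.Theory.
Import numFieldNormedType.Exports.
Local Open Scope classical_set_scope.
Local Open Scope ring_scope.

Section CompactOpen.
Context {K : numFieldType} {Om : topologicalType}.
Implicit Types (F B D : set (Om -> K)) (T Tt : set (set (Om -> K))).

Lemma delta_dual_B F T Tt (x : Om) : tau_co F `<=` Tt -> dual_B F T Tt (delta x).
Proof.
move=> coTt; split=> // B [BF _] f Bf e e0.
exists [set g | F g /\ `|g x - f x| < e]; split=> [||g _ []//].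
- apply: coTt; split=> [g []//|g [Fg gfx]].
  exists [set x], (e - `|g x - f x|); split; [exact: compact_set1|by rewrite subr_gt0|].
  move=> h [Fh /(_ x erefl)]; rewrite ltrBrDr => hgx; split=> //.
  exact: le_lt_trans (ler_distD (g x) _ _) hgx.
- by split; [exact: BF|rewrite subrr normr0].
Qed.

Definition equicontinuous_on_compacts B :=
  forall (C : set Om) (x1 : Om) (e : K), compact C -> C x1 -> 0 < e ->
    \forall x \near x1, C x -> forall f, B f -> `|f x - f x1| < e.

Lemma equicontinuous_on_compactsS {B D} :
  B `<=` D -> equicontinuous_on_compacts D -> equicontinuous_on_compacts B.
Proof.
move=> BD eqD C x1 e cC Cx1 e0.
by apply: filterS (eqD C x1 e cC Cx1 e0) => x eqx Cx f /BD; exact: eqx.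
Qed.

(* The slack [d] makes the ball open for the compact-open topology. *)
Definition co_ball F (C : set Om) (f : Om -> K) (r : K) :=
  [set g | F g /\ exists2 d, 0 < d & forall y, C y -> `|g y - f y| < r - d].

Lemma tau_co_co_ball F (C : set Om) f r : compact C -> tau_co F (co_ball F C f r).
Proof.
move=> cC; split=> [g []//|g [Fg [d d0 gfd]]].
exists C, (d / 2); split; rewrite ?divr_gt0//.
move=> h [Fh hgd]; split=> //; exists (d / 2); rewrite ?divr_gt0// => y Cy.
apply: le_lt_trans (ler_distD (g y) _ _) _.
have -> : r - d / 2 = d / 2 + (r - d) by field.
by rewrite ltrD ?hgd ?gfd.
Qed.

Lemma co_ball_center F (C : set Om) f r : F f -> 0 < r -> co_ball F C f r f.
Proof.
move=> Ff r0; split=> //; exists (r / 2); rewrite ?divr_gt0// => y _.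
by rewrite subrr normr0 {1}(splitr r) addrK divr_gt0.
Qed.

Lemma co_ball_dist F (C : set Om) f g r x x1 :
  co_ball F C f r g -> C x -> C x1 -> `|f x - f x1| < r -> `|g x - g x1| < r *+ 3.
Proof.
move=> [_ [d d0 gfd]] Cx Cx1 fx1.
have gf y : C y -> `|g y - f y| < r.
  by move=> Cy; apply: lt_le_trans (gfd y Cy) _; rewrite gerBl ltW.
apply: le_lt_trans (ler_distD (f x1) _ _) _.
apply: le_lt_trans (lerD (ler_distD (f x) _ _) (lexx _)) _.
by rewrite mulrS mulr2n addrA !ltrD ?gf // distrC gf.
Qed.

Lemma compact_in_equicontinuous {F Tt D} :
  (forall f, F f -> continuous f) -> tau_co F `<=` Tt -> D `<=` F -> compact_in Tt D ->
  equicontinuous_on_compacts D.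
Proof.
move=> Fcont coTt DF cD C x1 e cC Cx1 e0.
pose r := e / 3; have r0 : 0 < r by rewrite divr_gt0.
have r3 : r *+ 3 = e by rewrite /r -mulr_natr divfK ?pnatr_eq0.
have [S' [finS' S'S DS']] : exists S',
    [/\ finite_set S', S' `<=` [set co_ball F C f r | f in D] & D `<=` \bigcup_(U in S') U].
  apply: cD => [_ [f _ <-]|f Df]; first exact/coTt/tau_co_co_ball.
  by exists (co_ball F C f r); [exists f|exact/co_ball_center/r0/DF].
pose close (U : set (Om -> K)) := [set x | C x -> forall g, U g -> `|g x - g x1| < e].
have : \forall x \near x1, (\bigcap_(U in S') close U) x.
  have [X SX] := finite_fsetP.1 finS'; rewrite SX in S'S *.
  apply: filter_bigI => U /S'S [f Df <-].
  have /cvgrPdist_lt/(_ r r0) := Fcont f (DF f Df) x1.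
  apply: filterS => x fx1x Cx g /co_ball_dist/(_ Cx Cx1); rewrite distrC.
  by rewrite -r3; apply.
apply: filterS => x XU Cx f /DS'[U XUU Uf].
exact: XU XUU Cx f Uf.
Qed.

Lemma BBC_equicontinuous {F T Tt B} :
  function_space F -> tau_co F `<=` Tt -> BBC F T Tt -> bounded_in F T B ->
  equicontinuous_on_compacts B.
Proof.
move=> [_ _ _ Fcont] coTt bbc /bbc[D [BD _ [DF _] cD]].
exact: equicontinuous_on_compactsS BD (compact_in_equicontinuous Fcont coTt DF cD).
Qed.

End CompactOpen.

Lemma completely_regular_R (R : realType) : completely_regular R R.
Proof.
move=> C z cC Cz.
have /nbhs_ballP[r /= r0 rC] : nbhs z (~` C).
  by apply: open_nbhs_nbhs; split=> //; exact: closed_openC.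
exists (fun y => Num.min 1 (`|y - z| / r)); split.
- move=> y; apply: (@continuous_min R R (fun=> 1) (fun y => `|y - z| / r)).
    exact: cvg_cst.
  apply: cvgM; last exact: cvg_cst.
  by apply: cvg_norm; apply: cvgB; [exact: cvg_id|exact: cvg_cst].
- by rewrite subrr normr0 mul0r; apply: min_r.
- move=> c Cc; apply: min_l; rewrite ler_pdivlMr // mul1r leNgt.
  by apply/negP => czr; apply: (rC c) => //; rewrite -ball_normE /= distrC.
Qed.

(* The gk_R property only tests maps into spaces such as R, so the norm of K is
   read in R through [nr]; this covers K = R and K = C. *)
Section GkREquicontinuity.
Context {R : realType} {K : numFieldType} {emb : {rmorphism R -> K}} {nr : K -> R}.
Hypotheses (emb_mono : {mono emb : x y / x <= y}) (normE : forall k, `|k| = emb (nr k)).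

Let emb_lt_mono : {mono emb : x y / x < y}. Proof. exact: leW_mono. Qed.

Lemma ltr_nr k r : (nr k < r) = (`|k| < emb r).
Proof. by rewrite normE emb_lt_mono. Qed.

Lemma nr_ge0 k : 0 <= nr k.
Proof. by rewrite -emb_mono rmorph0 -normE. Qed.

Lemma nr0 : nr 0 = 0.
Proof. by apply/le_anti; rewrite nr_ge0 -emb_mono rmorph0 -normE normr0 lexx. Qed.

Lemma nr_distD a b c : nr (a - b) <= nr (a - c) + nr (c - b).
Proof. by rewrite -emb_mono rmorphD -!normE ler_distD. Qed.

Lemma minr1_leD (a b c : R) : a <= b + c -> 0 <= c -> Num.min 1 a <= Num.min 1 b + c.
Proof.
by move=> abc c0; rewrite ge_min; have [b1|b1] := leP b 1; apply/orP; [right|left]; lra.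
Qed.

Section Oscillation.
Variables (Om : topologicalType) (B : set (Om -> K)) (x0 : Om).

(* Truncating at 1 keeps the family bounded, so that [sup] is not the junk value 0. *)
Definition oscillation (x : Om) := sup [set Num.min 1 (nr (f x - f x0)) | f in B].

Lemma oscillation_ub x f : B f -> Num.min 1 (nr (f x - f x0)) <= oscillation x.
Proof.
move=> Bf; apply: ub_le_sup; last by exists f.
by exists 1 => _ [g _ <-]; rewrite ge_min lexx.
Qed.

Lemma oscillation_le x r :
  (forall f, B f -> Num.min 1 (nr (f x - f x0)) <= r) -> 0 <= r -> oscillation x <= r.
Proof.
move=> Br r0; have [B0|/set0P[f Bf]] := eqVneq B set0.
  by rewrite /oscillation B0 image_set0 sup0.
apply: ge_sup; first by exists (Num.min 1 (nr (f x - f x0))), f.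
by move=> _ [g Bg <-]; exact: Br.
Qed.

Lemma oscillation_ge0 x : 0 <= oscillation x.
Proof.
have [B0|/set0P[f Bf]] := eqVneq B set0; first by rewrite /oscillation B0 image_set0 sup0.
by apply: le_trans (oscillation_ub x f Bf); rewrite le_min ler01 nr_ge0.
Qed.

Lemma oscillation_x0 : oscillation x0 = 0.
Proof.
apply: le_anti; rewrite oscillation_ge0 andbT oscillation_le // => f _.
by rewrite subrr nr0 ge_min lexx orbT.
Qed.

Lemma oscillation_leD x y d : 0 <= d -> (forall f, B f -> nr (f x - f y) <= d) ->
  oscillation x <= oscillation y + d.
Proof.
move=> d0 Bd; apply: oscillation_le => [f Bf|]; last by rewrite addr_ge0 ?oscillation_ge0.
apply: le_trans (lerD (oscillation_ub y f Bf) (lexx d)).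
apply: minr1_leD d0; apply: le_trans (nr_distD _ _ (f y)) _.
by rewrite addrC lerD2l Bd.
Qed.

Lemma oscillation_continuous_on_compact (C : set Om) :
  equicontinuous_on_compacts B -> compact C -> {within C, continuous oscillation}.
Proof.
move=> eqB cC; apply/subspace_continuousP => x1 Cx1; apply/cvgrPdist_lt => eps eps0.
have eps2 : 0 < eps / 2 by rewrite divr_gt0.
have embeps2 : 0 < emb (eps / 2) by rewrite -(rmorph0 emb) emb_lt_mono.
rewrite near_withinE; apply: filterS (eqB C x1 _ cC Cx1 embeps2) => x Bx Cx.
have Bxx1 f : B f -> nr (f x - f x1) <= eps / 2.
  by move=> Bf; rewrite ltW // ltr_nr Bx.
have Bx1x f : B f -> nr (f x1 - f x) <= eps / 2.
  by move=> Bf; rewrite ltW // ltr_nr distrC Bx.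
have := oscillation_leD _ _ _ (ltW eps2) Bxx1; have := oscillation_leD _ _ _ (ltW eps2) Bx1x.
rewrite /from_subspace real_ltr_norml ?num_real // => le1 le2; apply/andP; split; lra.
Qed.

Lemma gkR_equicontinuous_at : gkR_space R Om -> equicontinuous_on_compacts B ->
  forall e : K, 0 < e -> \forall x \near x0, forall f, B f -> `|f x - f x0| < e.
Proof.
move=> gk eqB e e0.
have osc_cont : continuous oscillation.
  by apply: (gk _ (completely_regular_R R)) => C; exact: oscillation_continuous_on_compact.
have nre0 : 0 < nr e by rewrite -emb_lt_mono rmorph0 -normE normr_gt0 gt_eqF.
have /cvgrPdist_lt/(_ (Num.min 1 (nr e))) := osc_cont x0.
rewrite lt_min ltr01 nre0 => /(_ isT); apply: filterS => x.
rewrite oscillation_x0 sub0r normrN => osc_lt f Bf.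
have lt1 := le_lt_trans (oscillation_ub x f Bf) (le_lt_trans (ler_norm _) osc_lt).
rewrite -[e]gtr0_norm // [`|e|]normE -ltr_nr ltNge.
by apply: contraTN lt1 => /(le_min2 (lexx 1)); rewrite -leNgt.
Qed.

End Oscillation.

Lemma delta_preimage_open {Om : topologicalType} {F : set (Om -> K)}
    {T Tt : set (set (Om -> K))} :
  gkR_space R Om -> function_space F -> tau_co F `<=` Tt -> BBC F T Tt ->
  forall U, beta_open F T Tt U -> open (delta @^-1` U).
Proof.
move=> gk Fs coTt bbc U [_ Uball]; rewrite openE => x0 Ux0.
have [B [e [bB e0 ballU]]] := Uball _ Ux0.
apply: filterS (gkR_equicontinuous_at _ _ x0 gk (BBC_equicontinuous Fs coTt bbc bB) e e0).
by move=> x Bx; apply: ballU; split; [exact: delta_dual_B|exact: Bx].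
Qed.

End GkREquicontinuity.

Local Open Scope complex_scope.

Theorem proposition4p9 (R : realType) :
  prop4p9_for R R /\ prop4p9_for R (complex R).
Proof.
split=> Om F tau taut _ _ gk Fs _ _ coTt bbc; split=> [x|]; try exact: delta_dual_B.
- exact: (delta_preimage_open (emb := idfun) (nr := Num.norm)
           (fun _ _ => erefl) (fun _ => erefl)).
- have normcE (z : R[i]) : `|z| = (Normc.normc z)%:C by case: z.
  exact: (delta_preimage_open (emb := real_complex R) (@lecR R) normcE).
Qed.
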